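(* Let $\mathcal{U}$ be a universe of $n$ element types with frequencies $f:\mathcal{U}\to\{1,2,\dots\}$ and total $N=\sum_{e}f(e)$, partitioned into groups $\mathbf{g}_1,\dots,\mathbf{g}_\ell$ with $n_j=|\mathbf{g}_j|$. Let $w$ be a positive integer dividing $n$, and let $w_j=\frac{n_j}{n}w$ be positive integers. Consider (i) a one-row Count-Min sketch (CM) with a uniform hash scheme, i.e. a hash $\mathsf{h}:\mathcal{U}\to[w]$ under which every bin receives exactly $n/w$ element types, and (ii) a one-row Fair-Count-Min sketch (FCM) whose $w$ bins are split into disjoint blocks of sizes $w_1,\dots,w_\ell$, with a hash mapping each group $\mathbf{g}_j$ into block $j$ so that every bin of block $j$ receives exactly $n_j/w_j$ element types of $\mathbf{g}_j$. Then $\mathcal{L}_{FCM}=\mathcal{L}_{CM}=N\left(\frac{n}{w}-1\right)$; in particular the price of fairness $\mathcal{L}_{FCM}-\mathcal{L}_{CM}$ equals $0$.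
   Context: In a one-row sketch with hash $\mathsf{h}$, the additive error of $e$ is $\varepsilon_A(e)=\sum_{e'\neq e:\mathsf{h}(e')=\mathsf{h}(e)}f(e')$, and the total additive error is $\mathcal{L}=\sum_{e\in\mathcal{U}}\varepsilon_A(e)$. The price of fairness is $\mathcal{L}_{FCM}-\mathcal{L}_{CM}$. *)

From mathcomp Require Import all_boot all_algebra.
Set Implicit Arguments. Unset Strict Implicit. Unset Printing Implicit Defensive.

Definition add_err (U : finType) (w : nat) (h : U -> 'I_w) (f : U -> nat) (e : U) : nat :=
  \sum_(e' : U | (e' != e) && (h e' == h e)) f e'.

Definition total_err (U : finType) (w : nat) (h : U -> 'I_w) (f : U -> nat) : nat :=
  \sum_(e : U) add_err h f e.

Definition bin_load (U : finType) (w : nat) (h : U -> 'I_w) (b : 'I_w) : nat :=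
  #|[set e : U | h e == b]|.

Definition group_size (U : finType) (l : nat) (g : U -> 'I_l) (j : 'I_l) : nat :=
  #|[set e : U | g e == j]|.

Definition price_of_fairness (U : finType) (w : nat) (hFCM hCM : U -> 'I_w) (f : U -> nat) : int :=
  (GRing.add (Posz (total_err hFCM f)) (GRing.opp (Posz (total_err hCM f)))).

From mathcomp Require Import all_boot all_algebra.

Set Implicit Arguments.
Unset Strict Implicit.
Unset Printing Implicit Defensive.

(* Exchanging the two sums, every [e'] is charged [f e'] once for each other
   element type sharing its bin, so the total error only depends on the bin
   loads.  Both sketches have all bin loads equal to [n/w], hence the same
   total error [N (n/w - 1)]: for FCM, a bin of block [j] holds exactly
   [n_j / w_j = n / w] element types. *)

Lemma total_err_bin_load (U : finType) (w : nat) (h : U -> 'I_w) (f : U -> nat) :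
  total_err h f = \sum_(e : U) f e * (bin_load h (h e)).-1.
Proof.
rewrite /total_err /add_err (exchange_big_dep xpredT) //=.
apply: eq_bigr => e' _.
rewrite (eq_bigl [in [set e | (e' != e) && (h e' == h e)]]); last first.
  by move=> e; rewrite inE.
rewrite sum_nat_const mulnC /bin_load (cardsD1 e' [set e | h e == h e']).
rewrite inE eqxx /=; congr (_ * _).
by apply: eq_card => e; rewrite !inE eq_sym [h e == _]eq_sym.
Qed.

Lemma total_err_uniform (U : finType) (w : nat) (h : U -> 'I_w) (f : U -> nat)
    (c : nat) :
  (forall b, bin_load h b = c) -> total_err h f = (\sum_(e : U) f e) * (c - 1).
Proof.
move=> loadE; rewrite total_err_bin_load big_distrl /=.
by apply: eq_bigr => e _; rewrite loadE subn1.
Qed.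

Lemma bin_load_block (U : finType) (w l : nat) (h : U -> 'I_w) (g : U -> 'I_l)
    (blk : 'I_w -> 'I_l) (b : 'I_w) :
  (forall e, blk (h e) = g e) ->
  bin_load h b = #|[set e : U | (h e == b) && (g e == blk b)]|.
Proof.
move=> hblk; apply: eq_card => e; rewrite !inE.
by case: eqP => //= <-; rewrite hblk eqxx.
Qed.

Lemma divn_proportional (n w m k : nat) :
  0 < w -> 0 < k -> w %| n -> m * w = k * n -> m %/ k = n %/ w.
Proof.
move=> w_gt0 k_gt0 /dvdnP [q ->] /eqP; rewrite mulnA eqn_pmul2r // => /eqP ->.
by rewrite mulKn // mulnK.
Qed.

Theorem mainTheorem3
  (U : finType) (f : U -> nat) (l : nat) (g : U -> 'I_l)
  (w : nat) (wj : 'I_l -> nat)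
  (hCM : U -> 'I_w) (hFCM : U -> 'I_w) (blk : 'I_w -> 'I_l) :
  (forall e, 0 < f e) ->
  0 < w -> w %| #|U| ->
  (* w_j = (n_j / n) w, a positive integer *)
  (forall j, group_size g j * w = wj j * #|U|) ->
  (forall j, 0 < wj j) ->
  (* CM: uniform hash, every bin gets exactly n/w element types *)
  (forall b, bin_load hCM b = #|U| %/ w) ->
  (* FCM: bins partitioned into blocks (blk b = block of bin b) of sizes w_j *)
  (forall j, #|[set b : 'I_w | blk b == j]| = wj j) ->
  (* group g_j hashed into block j *)
  (forall e, blk (hFCM e) = g e) ->
  (* every bin of block j receives exactly n_j / w_j element types of g_j *)
  (forall b, #|[set e : U | (hFCM e == b) && (g e == blk b)]|
             = group_size g (blk b) %/ wj (blk b)) ->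
  total_err hFCM f = total_err hCM f /\
  total_err hCM f = (\sum_(e : U) f e) * (#|U| %/ w - 1) /\
  price_of_fairness hFCM hCM f = Posz 0.
Proof.
move=> _ w_gt0 w_dvd_n groupE wj_gt0 loadCM _ blk_hFCM loadFCM_block.
have loadFCM b : bin_load hFCM b = #|U| %/ w.
  by rewrite (bin_load_block b blk_hFCM) loadFCM_block; apply: divn_proportional.
have errCM := total_err_uniform f loadCM.
have errFCM := total_err_uniform f loadFCM.
by rewrite /price_of_fairness errCM errFCM GRing.subrr.
Qed.
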